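(* Let $m\ge2$ and let $r\ge0$ be the integer with $2^r\,\|\,m+1$. Then for every $a\in\{1,2,\dots,m\}$, $a$ is periodic under $f_2$ (i.e. $f_2^t(a)=a$ for some $t\ge1$) if and only if $2^r\,\|\,a$. Equivalently, the union of all fixed sets $K(x)\ne\{0\}$ of the two-digit base-$m$ Kaprekar map equals $\{a(m-1):1\le a\le m,\ 2^r\,\|\,a\}$.
   Context: For an integer $m\ge2$, $X=\{0,1,\dots,m^2-1\}$, each element written with exactly two base-$m$ digits (leading zeros allowed), and $f(x)=D(x)-A(x)$ is the two-digit base-$m$ Kaprekar map ($D(x)$, $A(x)$: digits of $x$ in nonincreasing, resp. nondecreasing, order). The map $f_2:\{0,\dots,m\}\to\{0,\dots,m\}$ is defined by $f(a(m-1))=f_2(a)(m-1)$; explicitly $f_2(0)=0$ and $f_2(a)=|2a-m-1|$ for $1\le a\le m$. For integers $r\ge0$ and $N\neq0$, $2^r\,\|\,N$ means $2^r\mid N$ and $2^{r+1}\nmid N$. The fixed set of $x$ is $K(x)=\{f^{S(x)+i}(x):0\le i<T(x)\}$, where $S(x)$ is the least $s\ge0$ with $f^{s+t}(x)=f^s(x)$ for some $t\ge1$ and $T(x)$ the least such $t$ for $s=S(x)$. *)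

From mathcomp Require Import all_boot.
Set Implicit Arguments. Unset Strict Implicit. Unset Printing Implicit Defensive.

Definition exact_pow2 (r N : nat) : Prop := (2 ^ r %| N) /\ ~~ (2 ^ r.+1 %| N).

(* Two-digit base-m Kaprekar map on X = {0,...,m^2-1}: digits x %/ m and x %% m;
   D = larger digit first, A = smaller digit first, f x = D - A. *)
Definition kap (m x : nat) : nat :=
  let d1 := x %/ m in let d0 := x %% m in
  (maxn d1 d0 * m + minn d1 d0) - (minn d1 d0 * m + maxn d1 d0).

(* f_2(0) = 0, f_2(a) = |2a - m - 1| for a >= 1 (nat absolute difference). *)
Definition f2 (m a : nat) : nat :=
  if a == 0 then 0 else (a.*2 - m.+1) + (m.+1 - a.*2).

(* y belongs to the fixed set K(x) = { f^(S(x)+i)(x) : 0 <= i < T(x) }, where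
   S(x) is the least s admitting t >= 1 with f^(s+t) x = f^s x, and T(x) is the
   least such t for s = S(x). *)
Definition inK (m x y : nat) : Prop :=
  exists s t,
    [/\ 0 < t /\ iter (s + t) (kap m) x = iter s (kap m) x,
        (forall s' t', 0 < t' -> iter (s' + t') (kap m) x = iter s' (kap m) x -> s <= s'),
        (forall t', 0 < t' -> iter (s + t') (kap m) x = iter s (kap m) x -> t <= t')
      & exists2 i, i < t & y = iter (s + i) (kap m) x].

From mathcomp Require Import all_boot zify.
Set Implicit Arguments. Unset Strict Implicit. Unset Printing Implicit Defensive.

(* Write n = m + 1 = 2^r * n' with n' odd.  For 1 <= a <= m, f_2(a) = |2a - n|.

   Two 2-adic facts drive everything:
   - if 2^k | a and 2^(k+1) | n then 2^(k+1) | f_2(a); iterating, f_2^r(b) is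
     divisible by 2^r for every b, so a periodic point a = f_2^(tr)(a) is;
   - if 2^r | a (a >= 1) then 2^r || f_2(a), since v_2(2a) > r = v_2(n).
   Hence the set S = {a <= m : 2^r || a} is f_2-invariant and every periodic
   point lies in S.  Conversely f_2 is injective on S (f_2 a = f_2 b forces
   a = b or a + b = n, and the latter is impossible since a + b has 2-adic
   valuation > r), so by pigeonhole every point of S is periodic.

   On two-digit numbers
   f(d1 m + d0) = |d1 - d0| (m - 1), and f(a (m-1)) = f_2(a) (m - 1) for a <= m.
   An element of a fixed set is f-periodic, hence of the form c (m - 1) with c
   f_2-periodic; c = 0 forces the fixed set to be {0}, otherwise part 1 applies.
   Conversely, for a periodic a, y = a (m - 1) is f-periodic and lies in its own
   fixed set K(y), which contains y <> 0. *)

Lemma iter_invariant (T : Type) (f : T -> T) (P : T -> Prop) k x :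
  (forall y, P y -> P (f y)) -> P x -> P (iter k f x).
Proof. by move=> fP Px; elim: k => //= k; apply: fP. Qed.

Lemma iter_period_mul (T : Type) (f : T -> T) t k x :
  iter t f x = x -> iter (k * t) f x = x.
Proof. by move=> ft; rewrite iterM iter_fix. Qed.

Lemma iter_eventual_period (T : Type) (f : T -> T) s t j k x :
  iter (s + t) f x = iter s f x -> iter (j + s + t * k) f x = iter (j + s) f x.
Proof.
move=> per; rewrite -addnA iterD [in RHS]iterD; congr (iter j f _).
by rewrite addnC iterD mulnC iter_period_mul // -iterD addnC.
Qed.

Lemma iter_cancel (T : Type) (f : T -> T) (P : T -> Prop) d i x :
  (forall y, P y -> P (f y)) -> (forall y z, P y -> P z -> f y = f z -> y = z) ->
  P x -> iter (d + i) f x = iter i f x -> iter d f x = x.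
Proof.
move=> fP finj Px; elim: i => [|i IH]; first by rewrite addn0.
rewrite addnS => /= eq_f; apply: IH.
by apply: finj eq_f; apply: iter_invariant.
Qed.

(* Pigeonhole: a map injective on an invariant set covered by a finite list
   makes every point of that set periodic. *)
Lemma injective_invariant_periodic (T : eqType) (f : T -> T) (P : T -> Prop)
    (s : seq T) a :
  (forall y, P y -> P (f y)) -> (forall y z, P y -> P z -> f y = f z -> y = z) ->
  (forall y, P y -> y \in s) -> P a -> exists2 t, 0 < t & iter t f a = a.
Proof.
move=> fP finj Ps Pa.
pose orbit := [seq iter i f a | i <- iota 0 (size s).+1].
have /(uniqPn a) [i [j [ij j_lt eq_ij]]] : ~~ uniq orbit.
  apply/negP => orbit_uniq.
  have : size orbit <= size s.
    apply: uniq_leq_size orbit_uniq _ => _ /mapP [k _ ->].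
    by apply: Ps; apply: iter_invariant.
  by rewrite size_map size_iota ltnn.
move: j_lt eq_ij; rewrite size_map size_iota => j_lt.
rewrite !(nth_map 0) ?size_iota ?(ltn_trans ij) // !nth_iota ?(ltn_trans ij) //.
rewrite !add0n -(subnK (ltnW ij)) => /esym eq_ij.
by exists (j - i); [rewrite subn_gt0 | apply: (iter_cancel fP finj Pa eq_ij)].
Qed.

Lemma exact_pow2P r x : exact_pow2 r x <-> exists2 x', x = 2 ^ r * x' & odd x'.
Proof.
rewrite /exact_pow2 expnS; split.
- case=> /dvdnP [q ->]; rewrite dvdn_pmul2r ?expn_gt0 // dvdn2 negbK => odd_q.
  by exists q; rewrite 1?mulnC.
- case=> q -> odd_q; split; first exact: dvdn_mulr.
  by rewrite [2 * _]mulnC dvdn_pmul2l ?expn_gt0 // dvdn2 odd_q.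
Qed.

Lemma exact_pow2_gt0 r x : exact_pow2 r x -> 0 < x.
Proof. by case: x => // [[_]]; rewrite dvdn0. Qed.

(* If 2^r || n and 2^(r+1) | b then 2^r || |b - n|: the quotient by 2^r is
   |even - odd|, which is odd. *)
Lemma exact_pow2_dist r n b :
  exact_pow2 r n -> 2 ^ r.+1 %| b -> exact_pow2 r ((b - n) + (n - b)).
Proof.
move=> /exact_pow2P [n' -> odd_n'] /dvdnP [q ->]; apply/exact_pow2P.
exists ((q.*2 - n') + (n' - q.*2)).
  by rewrite mulnDr !mulnBr expnS -muln2; congr (_ - _ + (_ - _)); lia.
have [le_qn|lt_nq] := leqP q.*2 n'.
- by rewrite (eqP le_qn) add0n oddB // odd_n' odd_double.
- by rewrite (eqP (ltnW lt_nq)) addn0 oddB ?(ltnW lt_nq) // odd_n' odd_double.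
Qed.

Lemma f2_pos m a : 0 < a -> f2 m a = (a.*2 - m.+1) + (m.+1 - a.*2).
Proof. by rewrite /f2; case: a. Qed.

Lemma f2_le m a : a <= m -> f2 m a <= m.
Proof. by rewrite /f2; case: a => //= a; lia. Qed.

Lemma f2_dvd_step m k a : 2 ^ k.+1 %| m.+1 -> 2 ^ k %| a -> 2 ^ k.+1 %| f2 m a.
Proof.
case: a => [|a] dvd_n dvd_a; first by rewrite dvdn0.
have dvd_2a : 2 ^ k.+1 %| a.+1.*2 by rewrite -muln2 expnSr dvdn_pmul2r.
by rewrite f2_pos // dvdn_add // dvdn_sub.
Qed.

Lemma f2_iter_dvd m r k b : 2 ^ r %| m.+1 -> k <= r -> 2 ^ k %| iter k (f2 m) b.
Proof.
move=> dvd_n; elim: k => [|k IH] lt_kr; first by rewrite dvd1n.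
apply: f2_dvd_step (IH (ltnW lt_kr)).
by apply: dvdn_trans dvd_n; rewrite dvdn_exp2l.
Qed.

Lemma f2_exact m r a :
  exact_pow2 r m.+1 -> 0 < a -> 2 ^ r %| a -> exact_pow2 r (f2 m a).
Proof.
move=> exact_n a_gt0 dvd_a; rewrite f2_pos //; apply: exact_pow2_dist => //.
by rewrite -muln2 expnSr dvdn_pmul2r.
Qed.

Lemma f2_inj_exact m r a b : exact_pow2 r m.+1 -> exact_pow2 r a ->
  exact_pow2 r b -> f2 m a = f2 m b -> a = b.
Proof.
move=> exact_n exact_a exact_b.
rewrite !f2_pos ?(exact_pow2_gt0 exact_a) ?(exact_pow2_gt0 exact_b) // => eq_f.
have [//|sum_ab] : a = b \/ a + b = m.+1 by lia.
move: exact_n exact_a exact_b sum_ab.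
move=> /exact_pow2P [n' -> odd_n'] /exact_pow2P [a' -> odd_a'] /exact_pow2P [b' -> odd_b'].
rewrite -mulnDr => /eqP; rewrite eqn_pmul2l ?expn_gt0 // => /eqP sum_ab'.
by move: odd_n'; rewrite -sum_ab' oddD odd_a' odd_b'.
Qed.

Definition exact_le (m r a : nat) : Prop := exact_pow2 r a /\ a <= m.

Lemma exact_le_f2 m r :
  exact_pow2 r m.+1 -> forall a, exact_le m r a -> exact_le m r (f2 m a).
Proof.
move=> exact_n a [exact_a le_am]; split; last exact: f2_le.
by apply: f2_exact (exact_pow2_gt0 exact_a) _; case: exact_a.
Qed.

Lemma f2_periodicE m r a : exact_pow2 r m.+1 -> 1 <= a <= m ->
  (exists2 t, 0 < t & iter t (f2 m) a = a) <-> exact_pow2 r a.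
Proof.
move=> exact_n /andP [a_gt0 le_am]; split.
- case=> t t_gt0 per.
  have dvd_a : 2 ^ r %| a.
    rewrite -(iter_period_mul r per) mulnC -(subnKC (leq_pmull r t_gt0)) iterD.
    exact: f2_iter_dvd (proj1 exact_n) (leqnn r).
  have S_fa : exact_le m r (f2 m a).
    by split; [apply: f2_exact | apply: f2_le].
  rewrite -per -(prednK t_gt0) iterSr.
  by case: (iter_invariant t.-1 (exact_le_f2 exact_n) S_fa).
- move=> exact_a.
  apply: (injective_invariant_periodic (exact_le_f2 exact_n) _ _ (s := iota 1 m)).
  + by move=> y z [Sy _] [Sz _]; apply: f2_inj_exact exact_n Sy Sz.
  + by move=> y [/exact_pow2_gt0 y_gt0 le_ym]; rewrite mem_iota y_gt0 add1n ltnS.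
  + by split.
Qed.

Lemma kap_digits m d1 d0 : d1 < m -> d0 < m ->
  kap m (d1 * m + d0) = ((d1 - d0) + (d0 - d1)) * (m - 1).
Proof.
move=> lt_d1 lt_d0; have m_gt0 : 0 < m by lia.
rewrite /kap divnMDl // divn_small // addn0 modnMDl modn_small //.
by case: leqP; nia.
Qed.

Lemma kap0 m : kap m 0 = 0.
Proof. by rewrite /kap div0n mod0n maxnn minnn subnn. Qed.

Lemma kap_image m x : x < m ^ 2 -> exists2 c, c < m & kap m x = c * (m - 1).
Proof.
move=> lt_x; have m_gt0 : 0 < m by case: m lt_x.
have lt_d1 : x %/ m < m by rewrite ltn_divLR // -expnSr.
have lt_d0 : x %% m < m by rewrite ltn_pmod.
exists ((x %/ m - x %% m) + (x %% m - x %/ m)).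
  by move: lt_d1 lt_d0; move: (x %/ m) (x %% m) => d1 d0; lia.
by rewrite {1}(divn_eq x m) kap_digits.
Qed.

Lemma digit_multiple_lt m c : 0 < m -> c <= m -> c * (m - 1) < m ^ 2.
Proof. by move=> m_gt0 le_c; rewrite -mulnn; nia. Qed.

Lemma kap_iter_lt m k x : x < m ^ 2 -> iter k (kap m) x < m ^ 2.
Proof.
move=> lt_x; apply: (iter_invariant (P := fun y => y < m ^ 2)) lt_x => y.
by case/kap_image => c lt_c ->; apply: digit_multiple_lt (ltnW lt_c); lia.
Qed.

Lemma kap_multiple m a : 0 < m -> a <= m -> kap m (a * (m - 1)) = f2 m a * (m - 1).
Proof.
case: a => [|a] m_gt0 le_am; first by rewrite mul0n kap0.
rewrite (_ : a.+1 * (m - 1) = a * m + (m - a.+1)); last by nia.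
by rewrite kap_digits ?f2_pos //; try lia; congr (_ * _); lia.
Qed.

Lemma kap_iter_multiple m k a : 0 < m -> a <= m ->
  iter k (kap m) (a * (m - 1)) = iter k (f2 m) a * (m - 1).
Proof.
move=> m_gt0 le_am; elim: k => [|k IH] //=.
rewrite IH kap_multiple //; exact: (iter_invariant k (@f2_le m)).
Qed.

Lemma inK_periodic m x y : inK m x y -> exists2 t, 0 < t & iter t (kap m) y = y.
Proof.
case=> s [t [[t_gt0 per] _ _ [i _ ->]]]; exists t => //.
rewrite -iterD (_ : t + (s + i) = i + s + t * 1); last by lia.
by rewrite iter_eventual_period // addnC.
Qed.

Lemma inK_zero m x z : inK m x 0 -> inK m x z -> z = 0.
Proof.
case=> s [t [[t_gt0 per] min_s _ [i _ orbit0]]].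
case=> s' [t' [[t'_gt0 per'] _ _ [i' _ ->]]].
have le_ss' := min_s _ _ t'_gt0 per'.
have le_i : i <= t * i by rewrite leq_pmull.
rewrite (_ : s' + i' = s' - s + i' + s); last by lia.
rewrite -(iter_eventual_period _ i per).
have -> : s' - s + i' + s + t * i = (s' - s + i' + t * i - i) + (s + i) by lia.
by rewrite iterD -orbit0 iter_fix ?kap0.
Qed.

Lemma inK_self m y t : 0 < t -> iter t (kap m) y = y -> inK m y y.
Proof.
move=> t_gt0 per.
have ex_per : exists n, (0 < n) && (iter n (kap m) y == y).
  by exists t; rewrite t_gt0 per eqxx.
case: (ex_minnP ex_per) => T /andP [T_gt0 /eqP perT] min_T.
exists 0, T; split => //.
- by move=> t' t'_gt0 per'; apply: min_T; rewrite t'_gt0 per' eqxx.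
- by exists 0.
Qed.

Lemma inK_multiple m x y : 2 <= m -> x < m ^ 2 -> inK m x y ->
  exists2 c, c < m & y = c * (m - 1) /\ exists2 t, 0 < t & iter t (f2 m) c = c.
Proof.
move=> m_ge2 lt_x yK; have [t t_gt0 per] := inK_periodic yK.
have lt_y : y < m ^ 2.
  by case: yK => s [_ [_ _ _ [i _ ->]]]; apply: kap_iter_lt.
have [c lt_c y_c] : exists2 c, c < m & y = c * (m - 1).
  by rewrite -per -(prednK t_gt0) /=; apply/kap_image/kap_iter_lt.
exists c => //; split => //; exists t => //.
apply/eqP; rewrite -(eqn_pmul2r (_ : 0 < m - 1)); last by lia.
by rewrite -kap_iter_multiple ?(ltnW lt_c) 1?ltnW // -y_c per y_c.
Qed.

Theorem lemma3p4p1 (m r : nat) :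
  2 <= m -> exact_pow2 r m.+1 ->
  (forall a, 1 <= a <= m ->
     ((exists2 t, 0 < t & iter t (f2 m) a = a) <-> exact_pow2 r a))
  /\
  (forall y,
     (exists x, [/\ x < m ^ 2, ~ (forall z, inK m x z <-> z = 0) & inK m x y])
     <-> (exists a, [/\ 1 <= a <= m, exact_pow2 r a & y = a * (m - 1)])).
Proof.
move=> m_ge2 exact_n; have m_gt0 : 0 < m by lia.
split=> [a|y]; first exact: f2_periodicE.
split.
- case=> x [lt_x notK0 yK].
  have [[|c] lt_c [y_c per_c]] := inK_multiple m_ge2 lt_x yK.
    move: yK; rewrite y_c mul0n => zeroK.
    by case: notK0 => z; split => [|->] //; exact: inK_zero.
  have range_c : 1 <= c.+1 <= m by rewrite ltn0Sn (ltnW lt_c).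
  by exists c.+1; split; rewrite // -(f2_periodicE exact_n range_c).
- case=> a [range_a exact_a y_a].
  have [t t_gt0 per_a] := (f2_periodicE exact_n range_a).2 exact_a.
  have le_am : a <= m by case/andP: range_a.
  have yK : inK m y y by apply: (inK_self t_gt0); rewrite y_a kap_iter_multiple // per_a.
  exists y; split => //; first by rewrite y_a; exact: digit_multiple_lt.
  move=> /(_ y)/proj1/(_ yK); rewrite y_a; apply/eqP.
  by rewrite muln_eq0 negb_or; apply/andP; split; lia.
Qed.
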